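(* Let $(X,\mathbb{F})$ be a non-autonomous system on a compact metric space and let $\Psi$ be a hyperspace admissible with $\mathbb{F}$ such that $\mathcal{F}(X)\subseteq\Psi$, endowed with any admissible hyperspace topology $\Delta$ (of hit-and-miss or hit-and-far-miss type). If the set of periodic points of $(X,\mathbb{F})$ is dense in $X$, then the set of periodic points of $(\Psi,\overline{\mathbb{F}})$ is dense in $(\Psi,\Delta)$.
   Context: $(X,d)$ is a compact metric space, $\mathbb{F}=(f_n)_{n\in\mathbb{N}}$ a sequence of continuous self-maps of $X$, and $\omega_n=f_n\circ f_{n-1}\circ\cdots\circ f_1$. A point $x$ is periodic for $\mathbb{F}$ if there is $n\in\mathbb{N}$ with $\omega_{nk}(x)=x$ for all $k\in\mathbb{N}$. $\mathcal{K}(X)$ denotes the non-empty compact subsets of $X$, $\mathcal{F}(X)$ the non-empty finite subsets. A hyperspace $\Psi\subseteq\mathcal{K}(X)$ is admissible with $\mathbb{F}$ if $\omega_k(A)\in\Psi$ for all $A\in\Psi$, $k\in\mathbb{N}$; the induced system $(\Psi,\overline{\mathbb{F}})$ is given by $\overline{f_n}(A)=f_n(A)$, so $\overline{\omega}_k(A)=\omega_k(A)$, and dynamical notions for it are defined as for $(X,\mathbb{F})$ with $\overline{\omega}_k$ in place of $\omega_k$ (so $A\in\Psi$ is periodic if $\overline{\omega}_{nk}(A)=A$ for all $k$, for some $n$). A hyperspace topology is admissible if $x\mapsto\{x\}$ is continuous; every admissible topology is of hit-and-miss type (subbasic sets $U^-=\{A: A\cap U\neq\emptyset\}$ for $U$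 open and $(E^c)^+=\{A: A\subseteq E^c\}$ for $E$ in a fixed family $\mathcal{C}$ of closed sets) or hit-and-far-miss type (with $(E^c)^{++}=\{A:\exists\varepsilon>0,\ S_\varepsilon(A)\subseteq E^c\}$ instead), and the induced maps are assumed continuous. *)

From Stdlib Require Import Reals List.
Open Scope R_scope.

(* Sets are predicates; hyperspace elements are sets of points. *)
Definition set (X : Type) := X -> Prop.

Record is_metric {X : Type} (d : X -> X -> R) : Prop := {
  metric_nonneg : forall x y, 0 <= d x y;
  metric_eq0 : forall x y, d x y = 0 <-> x = y;
  metric_sym : forall x y, d x y = d y x;
  metric_tri : forall x y z, d x z <= d x y + d y z }.

Section Metric.
Context {X : Type} (d : X -> X -> R).

Definition is_open (U : set X) : Prop :=
  forall x, U x -> exists eps, 0 < eps /\ forall y, d x y < eps -> U y.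

Definition is_closed (E : set X) : Prop := is_open (fun x => ~ E x).

Definition converges (u : nat -> X) (l : X) : Prop :=
  forall eps, 0 < eps -> exists N, forall n, (N <= n)%nat -> d (u n) l < eps.

(* (Sequential) compactness of a subset, appropriate for metric spaces. *)
Definition is_compact (K : set X) : Prop :=
  forall u : nat -> X, (forall n, K (u n)) ->
    exists (phi : nat -> nat) (l : X),
      (forall n, (phi n < phi (S n))%nat) /\ K l /\ converges (fun n => u (phi n)) l.

Definition compact_space : Prop := is_compact (fun _ => True).

Definition continuous (f : X -> X) : Prop :=
  forall x eps, 0 < eps -> exists delta, 0 < delta /\
    forall y, d x y < delta -> d (f x) (f y) < eps.

Definition dense (P : set X) : Prop :=
  forall x eps, 0 < eps -> exists p, P p /\ d x p < eps.

Definition Kset (A : set X) : Prop := is_compact A /\ exists x, A x.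

Definition Fset (A : set X) : Prop :=
  exists l : list X, l <> nil /\ forall x, A x <-> In x l.

Definition S_eps (eps : R) (A : set X) : set X :=
  fun y => exists x, A x /\ d x y < eps.

Definition hit (U : set X) : set (set X) := fun A => exists x, A x /\ U x.
Definition miss (E : set X) : set (set X) := fun A => forall x, A x -> ~ E x.
Definition far_miss (E : set X) : set (set X) :=
  fun A => exists eps, 0 < eps /\ forall y, S_eps eps A y -> ~ E y.

(* Basic open set determined by finitely many open sets Us (hit part)
   and finitely many E's from the family (miss part);
   far = false : hit-and-miss, far = true : hit-and-far-miss. *)
Definition basic (far : bool) (Us Es : list (set X)) : set (set X) :=
  fun A => (forall U, In U Us -> hit U A) /\
           (forall E, In E Es -> if far then far_miss E A else miss E A).

(* Open sets of the hyperspace topology on K(X) generated by the subbase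
   { U^- : U open } u { (E^c)^+ (resp. (E^c)^{++}) : E in C }. *)
Definition hyper_open (far : bool) (C : set (set X)) (W : set (set X)) : Prop :=
  forall A, Kset A -> W A ->
    exists Us Es, (forall U, In U Us -> is_open U) /\ (forall E, In E Es -> C E) /\
      basic far Us Es A /\
      forall B, Kset B -> basic far Us Es B -> W B.

(* Admissible hyperspace topology: C consists of closed sets and
   x |-> {x} is continuous. *)
Definition admissible_topology (far : bool) (C : set (set X)) : Prop :=
  (forall E, C E -> is_closed E) /\
  forall W, hyper_open far C W -> is_open (fun x => W (fun y => y = x)).

End Metric.

Definition image {X : Type} (f : X -> X) (A : set X) : set X :=
  fun y => exists x, A x /\ y = f x.

Definition set_eq {X : Type} (A B : set X) : Prop := forall x, A x <-> B x.

(* Non-autonomous system F = (f_1, f_2, ...): here f n stands for f_{n+1}.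
   omega f n = f_n o ... o f_1, omega f 0 = id. *)
Fixpoint omega {X : Type} (f : nat -> X -> X) (n : nat) (x : X) : X :=
  match n with
  | O => x
  | S m => f m (omega f m x)
  end.

Definition periodic {X : Type} (f : nat -> X -> X) (x : X) : Prop :=
  exists n, (1 <= n)%nat /\ forall k, (1 <= k)%nat -> omega f (n * k) x = x.

(* Induced system on hyperspace: omega-bar_k(A) = omega_k(A). *)
Definition hyper_periodic {X : Type} (f : nat -> X -> X) (A : set X) : Prop :=
  exists n, (1 <= n)%nat /\
    forall k, (1 <= k)%nat -> set_eq (image (omega f (n * k)) A) A.

Definition admissible_hyperspace {X : Type} (d : X -> X -> R)
    (f : nat -> X -> X) (Psi : set (set X)) : Prop :=
  (forall A, Psi A -> Kset d A) /\
  forall A k, Psi A -> (1 <= k)%nat -> Psi (image (omega f k) A).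

(* A basic neighbourhood of A asks a set to meet finitely many open sets U_i
   and to miss (resp. stay uniformly away from) finitely many closed sets E_j.
   Both requirements are inherited by every set lying in a suitable
   neighbourhood G of A: the complement of the E_j (which is open and contains
   A) in the hit-and-miss case, and a uniform half-radius thickening of A in
   the hit-and-far-miss case.  By density, pick in each U_i a periodic point of
   G close to a point of A ∩ U_i.  The finite set of these points is in Psi,
   lies in the basic neighbourhood, and is periodic for the induced system
   with the product of the periods as a common period. *)

From Stdlib Require Import Reals List.
From Stdlib Require Import Lra Lia.
Open Scope R_scope.

Section Radius.

Variable T : Type.
Variable Q : T -> R -> Prop.
Hypothesis Q_antitone : forall t e e', 0 < e' <= e -> Q t e -> Q t e'.

Lemma exists_common_radius (l : list T) :
  (forall t, In t l -> exists e, 0 < e /\ Q t e) ->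
  exists e, 0 < e /\ forall t, In t l -> Q t e.
Proof.
  induction l as [|t l IH]; intros Hl.
  - exists 1; split; [lra | intros t []].
  - destruct IH as [e [He HQ]]; [intros s Hs; apply Hl; right; exact Hs|].
    destruct (Hl t (or_introl eq_refl)) as [e' [He' HQ']].
    pose proof (Rmin_l e e'); pose proof (Rmin_r e e').
    exists (Rmin e e'); split; [apply Rmin_pos; assumption|].
    intros s [<-|Hs].
    + apply (Q_antitone t e'); [split; [apply Rmin_pos|]|]; auto.
    + apply (Q_antitone s e); [split; [apply Rmin_pos|]|]; auto.
Qed.

End Radius.

Section Neighbourhoods.

Context {X : Type} (d : X -> X -> R).

Definition nbhd_of (A G : set X) : Prop :=
  forall x, A x -> exists e, 0 < e /\ forall y, d x y < e -> G y.

Lemma nbhd_of_missed_closed (A : set X) (Es : list (set X)) :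
  (forall E, In E Es -> is_closed d E /\ miss E A) ->
  nbhd_of A (fun y => forall E, In E Es -> ~ E y).
Proof.
  intros HEs x Ax.
  destruct (exists_common_radius _ (fun E e => forall y, d x y < e -> ~ E y))
    with (l := Es) as [e [He Hball]].
  - intros E e e' He' Hy y Dy; apply Hy; lra.
  - intros E HE; destruct (HEs E HE) as [Eclosed Emiss].
    exact (Eclosed x (Emiss x Ax)).
  - exists e; split; [exact He|]; intros y Dy E HE; exact (Hball E HE y Dy).
Qed.

Hypothesis d_metric : is_metric d.

Lemma far_missed_neighbourhood (A : set X) (Es : list (set X)) :
  (forall E, In E Es -> far_miss d E A) ->
  exists G, nbhd_of A G /\
    forall B : set X, (forall y, B y -> G y) -> forall E, In E Es -> far_miss d E B.
Proof.
  intros HEs.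
  destruct (exists_common_radius _ (fun E e => forall y, S_eps d e A y -> ~ E y))
    with (l := Es) as [e [He Hfar]].
  { intros E e e' He' Hy y [x [Ax Dxy]]; apply Hy; exists x; split; [|lra]; exact Ax. }
  { exact HEs. }
  exists (S_eps d (e / 2) A); split.
  - intros x Ax; exists (e / 2); split; [lra|]; intros y Dy; exists x; auto.
  - intros B HB E HE; exists (e / 2); split; [lra|].
    intros y [p [Bp Dpy]]; destruct (HB p Bp) as [x [Ax Dxp]].
    apply (Hfar E HE); exists x; split; [exact Ax|].
    pose proof (metric_tri d d_metric x p y); lra.
Qed.

Lemma miss_part_neighbourhood (far : bool) (A : set X) (Es : list (set X)) :
  (forall E, In E Es -> is_closed d E) ->
  (forall E, In E Es -> if far then far_miss d E A else miss E A) ->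
  exists G, nbhd_of A G /\
    forall B : set X, (forall y, B y -> G y) ->
      forall E, In E Es -> if far then far_miss d E B else miss E B.
Proof.
  intros Hclosed HEs; destruct far.
  - exact (far_missed_neighbourhood A Es HEs).
  - exists (fun y => forall E, In E Es -> ~ E y); split.
    + apply nbhd_of_missed_closed; intros E HE; auto.
    + intros B HB E HE y By; exact (HB y By E HE).
Qed.

End Neighbourhoods.

Section PeriodicPoints.

Context {X : Type} (d : X -> X -> R) (f : nat -> X -> X).

Lemma dense_periodic_near (A G U : set X) (x : X) :
  dense d (periodic f) -> nbhd_of d A G -> is_open d U -> A x -> U x ->
  exists p, periodic f p /\ G p /\ U p.
Proof.
  intros Hdense HG HU Ax Ux.
  destruct (HG x Ax) as [e [He Hball]]; destruct (HU x Ux) as [e' [He' Hball']].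
  destruct (Hdense x (Rmin e e') (Rmin_pos _ _ He He')) as [p [Pp Dp]].
  pose proof (Rmin_l e e'); pose proof (Rmin_r e e').
  exists p; split; [exact Pp|]; split; [apply Hball | apply Hball']; lra.
Qed.

Lemma dense_periodic_hits (A G : set X) (x0 : X) (Us : list (set X)) :
  dense d (periodic f) -> nbhd_of d A G -> A x0 ->
  (forall U, In U Us -> is_open d U /\ hit U A) ->
  exists l : list X, l <> nil /\ (forall p, In p l -> periodic f p /\ G p) /\
    forall U, In U Us -> exists p, In p l /\ U p.
Proof.
  intros Hdense HG Ax0; induction Us as [|U Us IH]; intros HUs.
  - destruct (dense_periodic_near A G (fun _ => True) x0) as [p [Pp [Gp _]]]; auto.
    { intros y _; exists 1; split; [lra | auto]. }
    exists (p :: nil); split; [discriminate|]; split.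
    + intros q [<-|[]]; auto.
    + intros V [].
  - destruct IH as [l [Hnil [Hl Hhit]]]; [intros V HV; apply HUs; right; exact HV|].
    destruct (HUs U (or_introl eq_refl)) as [HU [x [Ax Ux]]].
    destruct (dense_periodic_near A G U x) as [p [Pp [Gp Up]]]; auto.
    exists (p :: l); split; [discriminate|]; split.
    + intros q [<-|Hq]; auto.
    + intros V [<-|HV].
      * exists p; split; [left|]; auto.
      * destruct (Hhit V HV) as [q [Hq Vq]]; exists q; split; [right|]; auto.
Qed.

Lemma periodic_common_period (l : list X) :
  (forall p, In p l -> periodic f p) ->
  exists N, (1 <= N)%nat /\
    forall p, In p l -> forall k, (1 <= k)%nat -> omega f (N * k) p = p.
Proof.
  induction l as [|a l IH]; intros Hl.
  - exists 1%nat; split; [lia | intros p []].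
  - destruct IH as [N [HN HNp]]; [intros p Hp; apply Hl; right; exact Hp|].
    destruct (Hl a (or_introl eq_refl)) as [n [Hn Hnp]].
    exists (n * N)%nat; split; [nia|].
    intros p [<-|Hp] k Hk.
    + replace (n * N * k)%nat with (n * (N * k))%nat by ring; apply Hnp; nia.
    + replace (n * N * k)%nat with (N * (n * k))%nat by ring; apply HNp; auto; nia.
Qed.

Lemma hyper_periodic_of_periodic_list (l : list X) :
  (forall p, In p l -> periodic f p) -> hyper_periodic f (fun y => In y l).
Proof.
  intros Hl; destruct (periodic_common_period l Hl) as [N [HN HNp]].
  exists N; split; [exact HN|]; intros k Hk y; split.
  - intros [x [Hx ->]]; rewrite HNp; auto.
  - intros Hy; exists y; split; [|rewrite HNp]; auto.
Qed.

End PeriodicPoints.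

Lemma Fset_of_list (X : Type) (l : list X) : l <> nil -> Fset (fun y => In y l).
Proof. intros Hl; exists l; split; [exact Hl | tauto]. Qed.

Theorem mainTheorem1 (X : Type) (d : X -> X -> R) (f : nat -> X -> X)
  (Psi : set (set X)) (far : bool) (C : set (set X)) :
  is_metric d ->
  compact_space d ->
  (forall n, continuous d (f n)) ->
  admissible_hyperspace d f Psi ->
  (forall A, Fset A -> Psi A) ->
  admissible_topology d far C ->
  (forall n W, hyper_open d far C W -> hyper_open d far C (fun A => W (image (f n) A))) ->
  dense d (periodic f) ->
  forall W, hyper_open d far C W ->
    (exists A, Psi A /\ W A) ->
    exists B, Psi B /\ W B /\ hyper_periodic f B.
Proof.
  intros Hmetric _ _ [HPsiK _] HFin [HCclosed _] _ Hdense W HW [A [PsiA WA]].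
  destruct (HPsiK A PsiA) as [_ [x0 Ax0]].
  destruct (HW A (HPsiK A PsiA) WA) as [Us [Es [HUs [HEs [[Hhit Hmiss] HbasicW]]]]].
  destruct (miss_part_neighbourhood d Hmetric far A Es) as [G [HG HGmiss]];
    [intros E HE; apply HCclosed, HEs; exact HE | exact Hmiss |].
  destruct (dense_periodic_hits d f A G x0 Us) as [l [Hnil [Hl Hlhit]]]; auto.
  assert (PsiB : Psi (fun y => In y l)) by (apply HFin, Fset_of_list, Hnil).
  exists (fun y => In y l); split; [exact PsiB|]; split.
  - apply HbasicW; [exact (HPsiK _ PsiB)|]; split.
    + intros U HU; destruct (Hlhit U HU) as [p [Hp Up]]; exists p; auto.
    + apply HGmiss; intros p Hp; apply Hl, Hp.
  - apply hyper_periodic_of_periodic_list; intros p Hp; apply Hl, Hp.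
Qed.
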